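(* Let $\mathcal{A}\subseteq\mathbb{R}^3$ be measurable with finite positive measure, $k_0,\eta>0$, and for $k\in\{1,2\}$ let $\mathsf{G}_k\in L^2(\mathcal{A})$ with $\mathsf{g}_k=\int_{\mathcal{A}}|\mathsf{G}_k|^2>0$, $\mathsf{H}_k=\frac{\mathrm{j}k_0\eta}{\sqrt{4\pi}}\mathsf{G}_k$, $A_{\mathsf{u},k}>0$, $\sigma_k>0$, and $\hat{\mathsf{H}}_k=\frac{\sqrt{A_{\mathsf{u},k}}}{\sigma_k}\mathsf{H}_k$. Let $\rho=\frac{\int_{\mathcal{A}}\mathsf{G}_1^*\mathsf{G}_2}{\sqrt{\mathsf{g}_1\mathsf{g}_2}}$. Let $\mathsf{P}>0$ and $\mathsf{P}_1,\mathsf{P}_2\ge0$ with $\mathsf{P}_1+\mathsf{P}_2=\mathsf{P}$, and put $\overline{\gamma}_{\mathsf{dl},k}=\frac{A_{\mathsf{u},k}k_0^2\eta^2}{4\pi\sigma_k^2}\mathsf{P}_k$. Define the source currents $$\mathsf{J}_{\mathsf{dl},1}(\mathbf{r})=\sqrt{\mathsf{P}_1}\,\frac{\hat{\mathsf{H}}_1^*(\mathbf{r})-\frac{\mathsf{P}_2\int_{\mathcal{A}}\hat{\mathsf{H}}_1^*\hat{\mathsf{H}}_2}{1+\mathsf{P}_2\int_{\mathcal{A}}|\hat{\mathsf{H}}_2|^2}\hat{\mathsf{H}}_2^*(\mathbf{r})}{\sqrt{\int_{\mathcal{A}}|\hat{\mathsf{H}}_1|^2-\frac{\mathsf{P}_2|\int_{\mathcal{A}}\hat{\mathsf{H}}_1^*\hat{\mathsf{H}}_2|^2}{1+\mathsf{P}_2\int_{\mathcal{A}}|\hat{\mathsf{H}}_2|^2}}},\qquad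 \mathsf{J}_{\mathsf{dl},2}(\mathbf{r})=\sqrt{\mathsf{P}_2}\,\frac{\hat{\mathsf{H}}_2^*(\mathbf{r})\sqrt{1+|\int_{\mathcal{A}}\hat{\mathsf{H}}_2\mathsf{J}_{\mathsf{dl},1}|^2}}{\sqrt{\int_{\mathcal{A}}|\hat{\mathsf{H}}_2|^2}}.$$ Define the downlink rates under dirty-paper coding with order $2\rightarrow1$: $$\mathsf{R}_{\mathsf{dl},1}^{2\rightarrow1}=\log_2\Big(1+\Big|\int_{\mathcal{A}}\hat{\mathsf{H}}_1\mathsf{J}_{\mathsf{dl},1}\Big|^2\Big),\qquad \mathsf{R}_{\mathsf{dl},2}^{2\rightarrow1}=\log_2\Big(1+\frac{|\int_{\mathcal{A}}\hat{\mathsf{H}}_2\mathsf{J}_{\mathsf{dl},2}|^2}{1+|\int_{\mathcal{A}}\hat{\mathsf{H}}_2\mathsf{J}_{\mathsf{dl},1}|^2}\Big).$$ Then $$\mathsf{R}_{\mathsf{dl},1}^{2\rightarrow1}=\log_2\!\Big(1+\overline{\gamma}_{\mathsf{dl},1}\mathsf{g}_1\Big(1-\tfrac{\overline{\gamma}_{\mathsf{dl},2}\mathsf{g}_2|\rho|^2}{1+\overline{\gamma}_{\mathsf{dl},2}\mathsf{g}_2}\Big)\Big),\qquad \mathsf{R}_{\mathsf{dl},2}^{2\rightarrow1}=\log_2(1+\overline{\gamma}_{\mathsf{dl},2}\mathsf{g}_2),$$ so that $\mathsf{R}_{\mathsf{dl},1}^{2\rightarrow1}+\mathsf{R}_{\mathsf{dl},2}^{2\rightarrow1}=\log_2(1+\overline{\gamma}_{\mathsf{dl},1}\mathsf{g}_1+\overline{\gamma}_{\mathsf{dl},2}\mathsf{g}_2+\overline{\gamma}_{\mathsf{dl},1}\overline{\gamma}_{\mathsf{dl},2}\mathsf{g}_1\mathsf{g}_2(1-|\rho|^2))$,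 and moreover $$\sum_{k=1}^2\int_{\mathcal{A}}|\mathsf{J}_{\mathsf{dl},k}(\mathbf{r})|^2\mathrm{d}\mathbf{r}=\mathsf{P}_1+\mathsf{P}_2=\mathsf{P}.$$
   Context: Integrals without variable are over $\mathbf{r}\in\mathcal{A}$ with respect to Lebesgue measure. In the paper $\mathcal{A}$ is the base-station continuous aperture, $\mathsf{G}_k(\mathbf{r})=\frac{e^{-\mathrm{j}k_0\|\mathbf{r}-\mathbf{s}_k\|}}{\sqrt{4\pi}\|\mathbf{r}-\mathbf{s}_k\|}\sqrt{\frac{|\mathbf{e}^{\mathsf{T}}(\mathbf{s}_k-\mathbf{r})|}{\|\mathbf{r}-\mathbf{s}_k\|}}$ (user locations $\mathbf{s}_k\notin\overline{\mathcal{A}}$, aperture normal $\mathbf{e}$), $A_{\mathsf{u},k}$ is user $k$'s aperture size, $\sigma_k^2$ its noise intensity, and $(\mathsf{P}_1,\mathsf{P}_2)$ is a power allocation of the dual uplink channel (the downlink sum-rate capacity is attained when it is the optimal dual allocation). *)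

From HB Require Import structures.
From mathcomp Require Import all_boot all_order all_algebra.
From mathcomp Require Import all_classical all_reals all_analysis.
From mathcomp Require Import complex.
Set Implicit Arguments. Unset Strict Implicit. Unset Printing Implicit Defensive.
Import Order.TTheory GRing.Theory Num.Theory.
Local Open Scope ring_scope.
Local Open Scope complex_scope.

Section Defs.
Variable R : realType.

Definition R3 : measurableType _ :=
  ((measurableTypeR R * measurableTypeR R) * measurableTypeR R)%type.

Definition leb3 : set R3 -> \bar R := (((@lebesgue_measure R) \x (@lebesgue_measure R)) \x (@lebesgue_measure R))%E.

Definition csq (z : R[i]) : R := (complex.Re z) ^+ 2 + (complex.Im z) ^+ 2.

Definition cint (A : set R3) (f : R3 -> R[i]) : R[i] :=
  (Rintegral leb3 A (fun x => complex.Re (f x)))%:C + 'i * (Rintegral leb3 A (fun x => complex.Im (f x)))%:C.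

Definition int_sq (A : set R3) (f : R3 -> R[i]) : R := Rintegral leb3 A (fun x => csq (f x)).

Definition L2 (A : set R3) (f : R3 -> R[i]) : Prop :=
  measurable_fun A (fun x => complex.Re (f x)) /\ measurable_fun A (fun x => complex.Im (f x)) /\
  leb3.-integrable A (fun x => (csq (f x))%:E).

Definition log2 (x : R) : R := ln x / ln 2.

End Defs.

From HB Require Import structures.
From mathcomp Require Import all_boot all_order all_algebra.
From mathcomp Require Import all_classical all_reals all_analysis.
From mathcomp Require Import measurable_realfun complex ring lra.
Set Implicit Arguments. Unset Strict Implicit. Unset Printing Implicit Defensive.
Import Order.TTheory GRing.Theory Num.Theory.

(* The two currents lie in the span of the conjugated channels, so every
   quantity of the theorem is a rational function of the Gram data
   [n_k = ∫ |Ĥ_k|^2] and [a = ∫ Ĥ_1^* Ĥ_2].  Indeed [J_1] is the conjugate of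
   [s (Ĥ_1 - t a^* Ĥ_2)] with [t = P_2 / (1 + P_2 n_2)], whence
   [∫ Ĥ_1 J_1 = s D] for the Schur complement [D = n_1 - t |a|^2], positive by
   Cauchy-Schwarz, and [∫ Ĥ_2 J_1 = s a / (1 + P_2 n_2)]; the normalisation of
   [J_2] cancels the interference term in the SINR of user 2 exactly.  The sum
   rate is then [log2 ((1 + P_1 D) (1 + P_2 n_2))], a determinant, and the
   power that [J_1] loses in the direction of [Ĥ_2] is exactly the extra power
   spent by [J_2].  Finally [Ĥ_k] is a scalar multiple of [G_k], so
   [n_k P_k = γ_k g_k] and [|a|^2 = n_1 n_2 |ρ|^2]. *)

(* [ring_scope] is opened last so that [^*] and ['i] denote [Num.conj] and
   [Num.imaginary], as in the statement of [theorem3]. *)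
Local Open Scope complex_scope.
Local Open Scope ring_scope.

Local Notation Re := complex.Re.
Local Notation Im := complex.Im.

Section ComplexArithmetic.
Variable R : realType.
Implicit Types (z w : R[i]) (r : R).

Lemma ReD z w : Re (z + w) = Re z + Re w.
Proof. by case: z => a b; case: w => c d. Qed.
Lemma ImD z w : Im (z + w) = Im z + Im w.
Proof. by case: z => a b; case: w => c d. Qed.
Lemma ReM z w : Re (z * w) = Re z * Re w - Im z * Im w.
Proof. by case: z => a b; case: w => c d. Qed.
Lemma ImM z w : Im (z * w) = Re z * Im w + Im z * Re w.
Proof. by case: z => a b; case: w => c d /=; rewrite addrC. Qed.
Lemma ReJ z : Re z^* = Re z. Proof. by case: z. Qed.
Lemma ImJ z : Im z^* = - Im z. Proof. by case: z. Qed.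

(* Stated for [Num.conj] and [%:C] themselves: [rmorphD] and friends leave the
   morphism structure in the rewritten term, where later rewrites miss it. *)
Lemma conjCD z w : (z + w)^* = z^* + w^*. Proof. exact: rmorphD. Qed.
Lemma conjCN z : (- z)^* = - z^*. Proof. exact: rmorphN. Qed.
Lemma conjCM z w : (z * w)^* = z^* * w^*. Proof. exact: rmorphM. Qed.
Lemma conjC_real_complex r : (r%:C)^* = r%:C :> R[i].
Proof. exact: conjc_real. Qed.

Lemma real_complexB r1 r2 : (r1 - r2)%:C = r1%:C - r2%:C :> R[i].
Proof. exact: rmorphB. Qed.
Lemma real_complexM r1 r2 : (r1 * r2)%:C = r1%:C * r2%:C :> R[i].
Proof. exact: rmorphM. Qed.
Lemma real_complexV r : (r^-1)%:C = (r%:C)^-1 :> R[i].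
Proof. exact: fmorphV. Qed.

Definition conjCE := (conjCD, conjCN, conjCM, @conjCK R[i], conjC_real_complex).
Definition real_complexE := (real_complexB, real_complexM, real_complexV).

Lemma csq_ge0 z : 0 <= csq z. Proof. by rewrite addr_ge0 ?sqr_ge0. Qed.
Lemma mulcJ_csq z : z * z^* = (csq z)%:C.
Proof. by rewrite add_Re2_Im2 sqr_normc. Qed.
Lemma csqM z w : csq (z * w) = csq z * csq w.
Proof. by case: z => a b; case: w => c d; rewrite /csq /=; ring. Qed.
Lemma csqJ z : csq z^* = csq z.
Proof. by rewrite /csq ReJ ImJ sqrrN. Qed.
Lemma csq_real_complex r : csq r%:C = r ^+ 2.
Proof. by rewrite /csq /= expr0n addr0. Qed.
Lemma csq_i : csq 'i = 1 :> R.
Proof. by rewrite /csq /= expr0n add0r expr1n. Qed.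
Lemma csq_eq0 z : (csq z == 0) = (z == 0).
Proof.
by rewrite -(inj_eq (@complexI _)) add_Re2_Im2 sqrf_eq0 normr_eq0.
Qed.
Lemma csqD z w : csq (z + w) = csq z + csq w + 2 * Re (z^* * w).
Proof. by case: z => a b; case: w => c d; rewrite /csq /=; ring. Qed.
Lemma Im_conjM z w : Im (z^* * w) = Re (('i * z)^* * w).
Proof. by case: z => a b; case: w => c d /=; ring. Qed.

End ComplexArithmetic.

Lemma log2M (R : realType) (x y : R) :
  0 < x -> 0 < y -> log2 (x * y) = log2 x + log2 y.
Proof. by move=> x_gt0 y_gt0; rewrite /log2 lnM ?posrE // mulrDl. Qed.

Section ComplexIntegral.
Variables (R : realType) (A : set (R3 R)).
Hypothesis mA : measurable A.
Local Notation mu := (@leb3 R).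
Implicit Types (f g : R3 R -> R[i]) (k : R[i]).

Definition rintegrable (F : R3 R -> R) := mu.-integrable A (EFin \o F).
Definition cintegrable f :=
  rintegrable (fun x => Re (f x)) /\ rintegrable (fun x => Im (f x)).

Lemma rintegrableB (F G : R3 R -> R) :
  rintegrable F -> rintegrable G -> rintegrable (fun x => F x - G x).
Proof. exact: integrableB. Qed.

Lemma rintegrableZ (r : R) (F : R3 R -> R) :
  rintegrable F -> rintegrable (fun x => r * F x).
Proof. exact: integrableZl. Qed.

Lemma cintD f g : cintegrable f -> cintegrable g ->
  cint A (fun x => f x + g x) = cint A f + cint A g.
Proof.
move=> [fR fI] [gR gI]; rewrite /cint.
under eq_Rintegral do rewrite ReD.
under [X in _ + 'i * X%:C]eq_Rintegral do rewrite ImD.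
by rewrite !RintegralD // !rmorphD /=; ring.
Qed.

Lemma cintZ k f : cintegrable f -> cint A (fun x => k * f x) = k * cint A f.
Proof.
move=> [fR fI]; rewrite /cint.
under eq_Rintegral do rewrite ReM.
under [X in _ + 'i * X%:C]eq_Rintegral do rewrite ImM.
rewrite RintegralB ?RintegralD ?RintegralZl //; [|exact: rintegrableZ..].
case: k => a b; apply/eqP; rewrite eq_complex /=.
by apply/andP; split; apply/eqP; ring.
Qed.

Lemma cint_conj f : cintegrable f -> cint A (fun x => (f x)^*) = (cint A f)^*.
Proof.
move=> [_ fI]; rewrite /cint.
under eq_Rintegral do rewrite ReJ.
under [X in _ + 'i * X%:C]eq_Rintegral do rewrite ImJ -mulN1r.
rewrite RintegralZl //; apply/eqP; rewrite eq_complex /=.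
by apply/andP; split; apply/eqP; ring.
Qed.

End ComplexIntegral.

Section SquareIntegrable.
Variables (R : realType) (A : set (R3 R)).
Hypothesis mA : measurable A.
Implicit Types (f g : R3 R -> R[i]) (k : R[i]).

Lemma int_sq_ge0 f : 0 <= int_sq A f.
Proof. by apply: Rintegral_ge0 => x _; exact: csq_ge0. Qed.

Lemma int_sqZ k f : L2 A f -> int_sq A (fun x => k * f x) = csq k * int_sq A f.
Proof.
move=> [_ [_ f2]]; rewrite /int_sq -RintegralZl //.
by apply: eq_Rintegral => x _; rewrite csqM.
Qed.

Lemma L2Z k f : L2 A f -> L2 A (fun x => k * f x).
Proof.
move=> [fR [fI f2]]; split; [|split].
- under eq_fun do rewrite ReM.
  by apply: measurable_funB; apply: measurable_funM.
- under eq_fun do rewrite ImM.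
  by apply: measurable_funD; apply: measurable_funM.
- under eq_fun do rewrite csqM EFinM.
  exact: integrableZl.
Qed.

Lemma L2D f g : L2 A f -> L2 A g -> L2 A (fun x => f x + g x).
Proof.
move=> [fR [fI f2]] [gR [gI g2]].
have fgR : measurable_fun A (fun x => Re (f x + g x)).
  by under eq_fun do rewrite ReD; exact: measurable_funD.
have fgI : measurable_fun A (fun x => Im (f x + g x)).
  by under eq_fun do rewrite ImD; exact: measurable_funD.
split; [by []|split; first by []].
apply: (le_integrable mA _ _ (integrableZl mA 2 (integrableD mA f2 g2))).
  by apply/measurable_EFinP; apply: measurable_funD; exact: measurable_funX.
move=> x _; rewrite /= lee_fin.
rewrite !ger0_norm ?mulr_ge0 ?addr_ge0 ?csq_ge0 ?sqr_ge0 //.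
case: (f x) => a b; case: (g x) => c d; rewrite /csq /=.
by have := sqr_ge0 (a - c); have := sqr_ge0 (b - d); nra.
Qed.

Lemma rintegrable_Re_conjM f g :
  L2 A f -> L2 A g -> rintegrable A (fun x => Re ((f x)^* * g x)).
Proof.
move=> Lf Lg; have [_ [_ fg2]] := L2D Lf Lg.
have [_ [_ f2]] := Lf; have [_ [_ g2]] := Lg.
have polar x : Re ((f x)^* * g x) = 2^-1 * (csq (f x + g x) - csq (f x) - csq (g x)).
  by rewrite csqD; field.
under eq_fun do rewrite polar.
exact: (rintegrableZ mA 2^-1 (rintegrableB mA (rintegrableB mA fg2 f2) g2)).
Qed.

Lemma cintegrable_conjM f g :
  L2 A f -> L2 A g -> cintegrable A (fun x => (f x)^* * g x).
Proof.
move=> Lf Lg; split; first exact: rintegrable_Re_conjM.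
under eq_fun do rewrite Im_conjM.
exact: rintegrable_Re_conjM (L2Z _ Lf) Lg.
Qed.

End SquareIntegrable.

Section InnerProduct.
Variables (R : realType) (A : set (R3 R)).
Hypothesis mA : measurable A.
Implicit Types (f g h : R3 R -> R[i]) (k p q : R[i]).

Definition cdot f g := cint A (fun x => (f x)^* * g x).

Lemma cint_mul_conj f g : cint A (fun x => f x * (g x)^*) = cdot g f.
Proof. by congr cint; apply: funext => x; rewrite mulrC. Qed.

Lemma cdotii f : cdot f f = (int_sq A f)%:C.
Proof.
rewrite /cdot /cint /int_sq.
under eq_Rintegral do rewrite mulrC mulcJ_csq.
under [X in _ + 'i * X%:C]eq_Rintegral do rewrite mulrC mulcJ_csq /=.
by rewrite Rintegral_cst // mul0r mulr0 addr0.
Qed.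

Lemma cdotC f g : L2 A f -> L2 A g -> cdot g f = (cdot f g)^*.
Proof.
move=> Lf Lg; rewrite /cdot -cint_conj //; last exact: cintegrable_conjM.
by congr cint; apply: funext => x; rewrite conjCM conjCK mulrC.
Qed.

Lemma cdotDl f g h : L2 A f -> L2 A g -> L2 A h ->
  cdot (fun x => f x + g x) h = cdot f h + cdot g h.
Proof.
move=> Lf Lg Lh; rewrite /cdot -cintD //; [|exact: cintegrable_conjM..].
by congr cint; apply: funext => x; rewrite conjCD mulrDl.
Qed.

Lemma cdotZl k f g : L2 A f -> L2 A g -> cdot (fun x => k * f x) g = k^* * cdot f g.
Proof.
move=> Lf Lg; rewrite /cdot -cintZ //; last exact: cintegrable_conjM.
by congr cint; apply: funext => x; rewrite conjCM mulrA.
Qed.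

Lemma cdotDr f g h : L2 A f -> L2 A g -> L2 A h ->
  cdot f (fun x => g x + h x) = cdot f g + cdot f h.
Proof.
move=> Lf Lg Lh; rewrite /cdot -cintD //; [|exact: cintegrable_conjM..].
by congr cint; apply: funext => x; rewrite mulrDr.
Qed.

Lemma cdotZr k f g : L2 A f -> L2 A g -> cdot f (fun x => k * g x) = k * cdot f g.
Proof.
move=> Lf Lg; rewrite /cdot -cintZ //; last exact: cintegrable_conjM.
by congr cint; apply: funext => x; rewrite mulrCA.
Qed.

Lemma cdot_combl p q f g h : L2 A f -> L2 A g -> L2 A h ->
  cdot (fun x => p * f x + q * g x) h = p^* * cdot f h + q^* * cdot g h.
Proof. by move=> Lf Lg Lh; rewrite cdotDl ?cdotZl //; exact: L2Z. Qed.

Lemma cdot_combr p q f g h : L2 A f -> L2 A g -> L2 A h ->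
  cdot f (fun x => p * g x + q * h x) = p * cdot f g + q * cdot f h.
Proof. by move=> Lf Lg Lh; rewrite cdotDr ?cdotZr //; exact: L2Z. Qed.

Lemma cdot_Cauchy_Schwarz f g : L2 A f -> L2 A g -> 0 < int_sq A g ->
  csq (cdot f g) <= int_sq A f * int_sq A g.
Proof.
move=> Lf Lg g_gt0.
pose w x := (int_sq A g)%:C * f x + (- cdot g f) * g x.
have Lw : L2 A w by apply: L2D => //; apply: L2Z.
have : (int_sq A w)%:C =
       (int_sq A g * (int_sq A f * int_sq A g - csq (cdot f g)))%:C.
  rewrite -cdotii // cdot_combl // !cdot_combr // !cdotii // (cdotC Lf Lg).
  (* Generalised so that the rewrites below cannot unfold the integral. *)
  move: (cdot f g) => a.
  by rewrite !(conjCE, real_complexE) -mulcJ_csq; ring.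
move=> /complexI w_eq; have := int_sq_ge0 A w.
by rewrite w_eq pmulr_rge0 // subr_ge0.
Qed.

Definition corr2 f g := csq (cdot f g) / (int_sq A f * int_sq A g).

Lemma csq_cdot_normalized f g :
  csq (cdot f g / (Num.sqrt (int_sq A f * int_sq A g))%:C) = corr2 f g.
Proof.
rewrite -real_complexV csqM csq_real_complex exprVn.
by rewrite sqr_sqrtr // mulr_ge0 ?int_sq_ge0.
Qed.

Lemma csq_cdotE f g : int_sq A f != 0 -> int_sq A g != 0 ->
  csq (cdot f g) = int_sq A f * int_sq A g * corr2 f g.
Proof. by move=> f_neq0 g_neq0; rewrite /corr2 mulrC divfK // mulf_neq0. Qed.

Lemma corr2Z k1 k2 f g : k1 != 0 -> k2 != 0 -> L2 A f -> L2 A g ->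
  corr2 (fun x => k1 * f x) (fun x => k2 * g x) = corr2 f g.
Proof.
move=> k1_neq0 k2_neq0 Lf Lg.
have k12_neq0 : csq k1 * csq k2 != 0 by rewrite mulf_neq0 // csq_eq0.
rewrite /corr2 cdotZl ?cdotZr //; last exact: L2Z.
rewrite !int_sqZ // !csqM csqJ mulrA mulrACA.
by rewrite -mulf_div divff // mul1r.
Qed.

End InnerProduct.

Section DirtyPaperCoding.
Variables (R : realType) (A : set (R3 R)) (P1 P2 : R) (h1 h2 : R3 R -> R[i]).

Local Notation n1 := (int_sq A h1).
Local Notation n2 := (int_sq A h2).
Local Notation a12 := (cdot A h1 h2).
Local Notation u := (1 + P2 * n2).
Local Notation D := (n1 - P2 * csq a12 / u).

Definition dpc_current1 x : R[i] :=
  (Num.sqrt P1)%:C *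
  (((h1 x)^* - (P2%:C * a12 / u%:C) * (h2 x)^*) / (Num.sqrt D)%:C).

Local Notation X := (csq (cint A (fun x => h2 x * dpc_current1 x))).

Definition dpc_current2 x : R[i] :=
  (Num.sqrt P2)%:C * (((h2 x)^* * (Num.sqrt (1 + X))%:C) / (Num.sqrt n2)%:C).

Hypotheses (mA : measurable A) (L2h1 : L2 A h1) (L2h2 : L2 A h2).
Hypotheses (n1_gt0 : 0 < n1) (n2_gt0 : 0 < n2) (P1_ge0 : 0 <= P1) (P2_ge0 : 0 <= P2).

Let u_gt0 : 0 < u. Proof. by rewrite ltr_pwDl // mulr_ge0 // ltW. Qed.

Let Du_gt0 : 0 < n1 * u - P2 * csq a12.
Proof.
have CS : 0 <= n1 * n2 - csq a12 by rewrite subr_ge0; exact: cdot_Cauchy_Schwarz.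
have -> : n1 * u - P2 * csq a12 = n1 + P2 * (n1 * n2 - csq a12) by ring.
by rewrite (lt_le_trans n1_gt0) // lerDl mulr_ge0.
Qed.

Let u_neq0 : u != 0. Proof. by rewrite gt_eqF. Qed.

Let D_gt0 : 0 < D.
Proof.
have -> : D = (n1 * u - P2 * csq a12) / u by field.
by rewrite divr_gt0.
Qed.

Let s := Num.sqrt P1 / Num.sqrt D.
Let t := P2 / u.
Let w1 x := s%:C * h1 x + (- (s * t)%:C * a12^*) * h2 x.
Let tau := Num.sqrt P2 * Num.sqrt (1 + X) / Num.sqrt n2.

Let DE : D = n1 - t * csq a12. Proof. by rewrite /t mulrAC. Qed.

Let s_sq : s ^+ 2 = P1 / D.
Proof. by rewrite /s expr_div_n !sqr_sqrtr // ltW. Qed.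

Let tau_sq : tau ^+ 2 = P2 * (1 + X) / n2.
Proof.
rewrite /tau !expr_div_n exprMn (sqr_sqrtr P2_ge0) (sqr_sqrtr (ltW n2_gt0)).
by rewrite sqr_sqrtr // addr_ge0 ?csq_ge0.
Qed.

Let L2w1 : L2 A w1. Proof. by apply: L2D => //; apply: L2Z. Qed.

Let dpc_current1E x : dpc_current1 x = (w1 x)^*.
Proof.
rewrite /dpc_current1 /w1 /s /t; move: (cdot A h1 h2) (h1 x) (h2 x) => a z1 z2.
by rewrite !(conjCE, real_complexE); ring.
Qed.

Let dpc_current2E x : dpc_current2 x = (tau%:C * h2 x)^*.
Proof.
by rewrite /dpc_current2 /tau conjCM conjC_real_complex !real_complexE; ring.
Qed.

Let cdot_w1_h1 : cdot A w1 h1 = (s * D)%:C.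
Proof.
rewrite cdot_combl // cdotii // (cdotC mA L2h1 L2h2) DE /t.
move: (cdot A h1 h2) => a.
by rewrite !(conjCE, real_complexE) -mulcJ_csq; ring.
Qed.

Let cdot_w1_h2 : cdot A w1 h2 = (s / u)%:C * a12.
Proof.
have -> : s / u = s * (1 - t * n2) by rewrite /t; field.
rewrite cdot_combl // cdotii //; move: (cdot A h1 h2) => a.
by rewrite !(conjCE, real_complexE); ring.
Qed.

Let cint_mul_current1 g : cint A (fun x => g x * dpc_current1 x) = cdot A w1 g.
Proof.
by rewrite -cint_mul_conj; congr cint; apply: funext => x; rewrite dpc_current1E.
Qed.

Let X_E : X = P1 * csq a12 / (D * u ^+ 2).
Proof.
rewrite cint_mul_current1 cdot_w1_h2 csqM csq_real_complex expr_div_n s_sq.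
by field; rewrite u_neq0 gt_eqF.
Qed.

Let cint_h2_current2 : cint A (fun x => h2 x * dpc_current2 x) = (tau * n2)%:C.
Proof.
transitivity (cdot A (fun x => tau%:C * h2 x) h2).
  by rewrite -cint_mul_conj; congr cint; apply: funext => x; rewrite dpc_current2E.
by rewrite cdotZl // cdotii // conjC_real_complex -real_complexM.
Qed.

Let int_sq_current1 : int_sq A dpc_current1 = s ^+ 2 * (D - t * csq a12 / u).
Proof.
have -> : int_sq A dpc_current1 = int_sq A w1.
  by apply: eq_Rintegral => x _; rewrite dpc_current1E csqJ.
apply: (@complexI R); rewrite -cdotii // cdot_combr // cdot_w1_h1 cdot_w1_h2.
move: (cdot A h1 h2) => a.
by rewrite !(conjCE, real_complexE) -mulcJ_csq; ring.
Qed.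

Let int_sq_current2 : int_sq A dpc_current2 = tau ^+ 2 * n2.
Proof.
have -> : int_sq A dpc_current2 = int_sq A (fun x => tau%:C * h2 x).
  by apply: eq_Rintegral => x _; rewrite dpc_current2E csqJ.
by rewrite int_sqZ // csq_real_complex.
Qed.

Lemma dpc_sinr1 : csq (cint A (fun x => h1 x * dpc_current1 x)) = P1 * D.
Proof.
rewrite cint_mul_current1 cdot_w1_h1 csq_real_complex exprMn s_sq.
by field; rewrite u_neq0 gt_eqF.
Qed.

Lemma dpc_sinr2 :
  csq (cint A (fun x => h2 x * dpc_current2 x)) / (1 + X) = P2 * n2.
Proof.
have X1_neq0 : 1 + X != 0 by rewrite gt_eqF // ltr_pwDl // csq_ge0.
rewrite cint_h2_current2 csq_real_complex exprMn tau_sq.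
by field; rewrite X1_neq0 gt_eqF.
Qed.

Lemma dpc_power : int_sq A dpc_current1 + int_sq A dpc_current2 = P1 + P2.
Proof.
rewrite int_sq_current1 int_sq_current2 tau_sq X_E s_sq /t.
by field; rewrite u_neq0 !gt_eqF.
Qed.

Lemma dpc_sum_rate :
  log2 (1 + csq (cint A (fun x => h1 x * dpc_current1 x))) +
  log2 (1 + csq (cint A (fun x => h2 x * dpc_current2 x)) / (1 + X)) =
  log2 (1 + P1 * n1 + P2 * n2 + P1 * P2 * (n1 * n2 - csq a12)).
Proof.
have rate1_gt0 : 0 < 1 + P1 * D by rewrite ltr_pwDl // mulr_ge0 // ltW.
rewrite dpc_sinr1 dpc_sinr2 -log2M //.
by congr log2; field.
Qed.

End DirtyPaperCoding.

Section ApertureGain.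
Variable R : realType.

Definition aperture_gain (Au s k0 eta : R) : R[i] :=
  (Num.sqrt Au / s)%:C * ('i * (k0 * eta / Num.sqrt (4 * pi))%:C).

Lemma csq_aperture_gain (Au s k0 eta : R) : 0 <= Au ->
  csq (aperture_gain Au s k0 eta) = Au * k0 ^+ 2 * eta ^+ 2 / (4 * pi * s ^+ 2).
Proof.
move=> Au_ge0; have pi4_ge0 : 0 <= 4 * pi :> R by rewrite mulr_ge0 // pi_ge0.
rewrite !csqM csq_i !csq_real_complex !expr_div_n !sqr_sqrtr // exprMn mul1r !invfM.
by ring.
Qed.

Lemma csq_aperture_gain_gt0 (Au s k0 eta : R) :
  0 < Au -> 0 < s -> 0 < k0 -> 0 < eta -> 0 < csq (aperture_gain Au s k0 eta).
Proof.
move=> Au_gt0 s_gt0 k0_gt0 eta_gt0.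
by rewrite csq_aperture_gain ?ltW // divr_gt0 ?mulr_gt0 ?exprn_gt0 ?pi_gt0.
Qed.

End ApertureGain.

Theorem theorem3 (R : realType) (A : set (R3 R)) (k0 eta : R)
  (G1 G2 : R3 R -> R[i]) (Au1 Au2 s1 s2 P P1 P2 : R) :
  measurable A -> (0 < leb3 A)%E -> (leb3 A < +oo)%E ->
  0 < k0 -> 0 < eta ->
  L2 A G1 -> L2 A G2 -> 0 < int_sq A G1 -> 0 < int_sq A G2 ->
  0 < Au1 -> 0 < Au2 -> 0 < s1 -> 0 < s2 ->
  0 < P -> 0 <= P1 -> 0 <= P2 -> P1 + P2 = P ->
  let g1 := int_sq A G1 in
  let g2 := int_sq A G2 in
  let H1 := fun x => ('i * (k0 * eta / Num.sqrt (4 * pi))%:C) * G1 x in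
  let H2 := fun x => ('i * (k0 * eta / Num.sqrt (4 * pi))%:C) * G2 x in
  let Hh1 := fun x => (Num.sqrt Au1 / s1)%:C * H1 x in
  let Hh2 := fun x => (Num.sqrt Au2 / s2)%:C * H2 x in
  let rho := cint A (fun x => (G1 x)^* * G2 x) / (Num.sqrt (g1 * g2))%:C in
  let gb1 := Au1 * k0 ^+ 2 * eta ^+ 2 / (4 * pi * s1 ^+ 2) * P1 in
  let gb2 := Au2 * k0 ^+ 2 * eta ^+ 2 / (4 * pi * s2 ^+ 2) * P2 in
  let a12 := cint A (fun x => (Hh1 x)^* * Hh2 x) in
  let n1 := int_sq A Hh1 in
  let n2 := int_sq A Hh2 in
  let J1 := fun x => (Num.sqrt P1)%:C *
      (((Hh1 x)^* - (P2%:C * a12 / (1 + P2 * n2)%:C) * (Hh2 x)^*)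
       / (Num.sqrt (n1 - P2 * csq a12 / (1 + P2 * n2)))%:C) in
  let J2 := fun x => (Num.sqrt P2)%:C *
      (((Hh2 x)^* * (Num.sqrt (1 + csq (cint A (fun y => Hh2 y * J1 y))))%:C)
       / (Num.sqrt n2)%:C) in
  let Rdl1 := log2 (1 + csq (cint A (fun x => Hh1 x * J1 x))) in
  let Rdl2 := log2 (1 + csq (cint A (fun x => Hh2 x * J2 x))
                       / (1 + csq (cint A (fun x => Hh2 x * J1 x)))) in
  [/\ Rdl1 = log2 (1 + gb1 * g1 * (1 - gb2 * g2 * csq rho / (1 + gb2 * g2))),
      Rdl2 = log2 (1 + gb2 * g2),
      Rdl1 + Rdl2 = log2 (1 + gb1 * g1 + gb2 * g2 + gb1 * gb2 * g1 * g2 * (1 - csq rho)),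
      int_sq A J1 + int_sq A J2 = P1 + P2 &
      P1 + P2 = P].
Proof.
move=> mA _ _ k0_gt0 eta_gt0 L2G1 L2G2 g1_gt0 g2_gt0 Au1_gt0 Au2_gt0 s1_gt0 s2_gt0.
move=> _ P1_ge0 P2_ge0 sumP g1 g2 H1 H2 Hh1 Hh2 rho gb1 gb2 a12 n1 n2.
move=> J1 J2 Rdl1 Rdl2.
pose l1 := aperture_gain Au1 s1 k0 eta; pose l2 := aperture_gain Au2 s2 k0 eta.
have l1_gt0 : 0 < csq l1 by exact: csq_aperture_gain_gt0.
have l2_gt0 : 0 < csq l2 by exact: csq_aperture_gain_gt0.
have Hh1E : Hh1 = fun x => l1 * G1 x by apply: funext => x; rewrite /Hh1 /H1 mulrA.
have Hh2E : Hh2 = fun x => l2 * G2 x by apply: funext => x; rewrite /Hh2 /H2 mulrA.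
have [L2Hh1 L2Hh2] : L2 A Hh1 /\ L2 A Hh2 by rewrite Hh1E Hh2E; split; exact: L2Z.
have n1E : n1 = csq l1 * g1 by rewrite /n1 Hh1E int_sqZ.
have n2E : n2 = csq l2 * g2 by rewrite /n2 Hh2E int_sqZ.
have [n1_gt0 n2_gt0] : 0 < n1 /\ 0 < n2 by rewrite n1E n2E !mulr_gt0.
have a12E : csq a12 = n1 * n2 * csq rho.
  have [l1_neq0 l2_neq0] : l1 != 0 /\ l2 != 0 by rewrite -!csq_eq0 !gt_eqF.
  rewrite /rho csq_cdot_normalized -(corr2Z mA l1_neq0 l2_neq0 L2G1 L2G2).
  by rewrite -Hh1E -Hh2E csq_cdotE ?gt_eqF.
have [gb1E gb2E] : gb1 = csq l1 * P1 /\ gb2 = csq l2 * P2.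
  by rewrite !csq_aperture_gain ?ltW.
split => //.
- rewrite /Rdl1 dpc_sinr1 // -/n1 -/n2 a12E n1E n2E gb1E gb2E.
  by congr log2; field; rewrite gt_eqF // ltr_pwDl // !mulr_ge0 // ltW.
- by rewrite /Rdl2 dpc_sinr2 // -/n2 n2E gb2E mulrCA mulrA.
- rewrite /Rdl1 /Rdl2 dpc_sum_rate // -/n1 -/n2 a12E n1E n2E gb1E gb2E.
  by congr log2; ring.
- exact: dpc_power.
Qed.
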